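(* For every virtual knot $K$ there exists a positive integer $n$ such that $K$ can be represented on a $1\times n$ virtual rectangular mosaic (a row mosaic).
   Context: Mosaic tiles are the eleven standard unit-square tiles $T_0,\dots,T_{10}$: $T_0$ is blank; $T_1,\dots,T_4$ each contain a single arc joining the midpoints of two adjacent sides; $T_5$ (horizontal) and $T_6$ (vertical) each contain a single straight segment joining midpoints of opposite sides; $T_7,T_8$ each contain two disjoint arcs, each joining midpoints of two adjacent sides; $T_9,T_{10}$ are the two crossing tiles, containing a horizontal and a vertical segment crossing at the center, with the vertical strand over in one and the horizontal strand over in the other. A virtual rectangular mosaic is an $m\times n$ array of such tiles together with a pairing (with orientation) of the $2(m+n)$ boundary unit edges of the array such that the quotient (''closure'') is a closed orientable surface $\Sigma_D$ carrying a knot or link diagram $D$; this represents a virtual knot/link (a knot diagram on a closed orientable surface up to stable equivalence; equivalently, a virtual knot diagram up to generalized Reidemeister moves, with interlocking boundary edge pairs giving virtual crossings). A row mosaic is a $1\times n$ virtual rectangular mosaic. *)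

From HB Require Import structures.
From mathcomp Require Import all_boot.
From Stdlib Require Import Relations.
Set Implicit Arguments. Unset Strict Implicit. Unset Printing Implicit Defensive.

(* Virtual knots as signed Gauss diagrams (Goussarov-Polyak-Viro / Kauffman) *)

(* An entry (l, o, s): passage through crossing l, over iff o, crossing sign
   positive iff s.  A Gauss code lists the passages along the knot, read
   cyclically from some base point. *)
Definition gentry := (nat * bool * bool)%type.
Definition gcode := seq gentry.

Definition glabel (e : gentry) : nat := e.1.1.

Definition gwf (c : gcode) : Prop :=
  forall e, e \in c ->
    count (fun f => glabel f == glabel e) c = 2 /\ (e.1.1, ~~ e.1.2, e.2) \in c.

Definition r3T (t u : nat) (st su : bool) (oT : bool) : gcode :=
  let q := [:: (t, true, st); (u, true, su)] in if oT then q else rev q.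
Definition r3M (t v : nat) (st sv : bool) (oM : bool) : gcode :=
  let q := [:: (t, false, st); (v, true, sv)] in if oM then q else rev q.
Definition r3B (u v : nat) (su sv : bool) (oB : bool) : gcode :=
  let q := [:: (u, false, su); (v, false, sv)] in if oB then q else rev q.

(* Elementary moves on Gauss codes: change of base point, relabelling of
   crossings, and the (all-variant) Reidemeister moves of Gauss diagrams. *)
Inductive gmove : gcode -> gcode -> Prop :=
| gm_rot (x y : gcode) : gmove (x ++ y) (y ++ x)
| gm_relabel (c : gcode) (f : nat -> nat) : injective f ->
    gmove c [seq (f e.1.1, e.1.2, e.2) | e <- c]
| gm_R1 (x y : gcode) (a : nat) (o s : bool) :
    gmove (x ++ y) (x ++ [:: (a, o, s); (a, ~~ o, s)] ++ y)
| gm_R2 (x y z : gcode) (a b : nat) (o s rv : bool) : a != b ->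
    gmove (x ++ y ++ z)
      (x ++ [:: (a, o, s); (b, o, ~~ s)] ++ y
         ++ (let q := [:: (a, ~~ o, s); (b, ~~ o, ~~ s)] in
             if rv then rev q else q) ++ z)
| gm_R3 (x1 x2 x3 x4 S1 S2 S3 : gcode) (t u v : nat) (oT oM oB h : bool) :
    uniq [:: t; u; v] ->
    (* t = top/middle crossing, u = top/bottom, v = middle/bottom;
       oX = order of the two crossings on strand X; signs as forced by the
       geometry of a triangle of three strands (h = handedness) *)
    let st := (oT == oM) == h in
    let su := (oT == oB) == h in
    let sv := (oM == oB) == h in
    perm_eq [:: S1; S2; S3]
      [:: r3T t u st su oT; r3M t v st sv oM; r3B u v su sv oB] ->
    gmove (x1 ++ S1 ++ x2 ++ S2 ++ x3 ++ S3 ++ x4)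
          (x1 ++ rev S1 ++ x2 ++ rev S2 ++ x3 ++ rev S3 ++ x4).

Definition gequiv : relation gcode :=
  clos_refl_sym_trans gcode (fun a b => gwf a /\ gwf b /\ gmove a b).

Inductive side := SN | SE | SS | SW.

Definition side_eq_dec (a b : side) : {a = b} + {a <> b}.
Proof. decide equality. Defined.

HB.instance Definition _ := hasDecEq.Build side (compareP side_eq_dec).

Inductive tile := T0 | T1 | T2 | T3 | T4 | T5 | T6 | T7 | T8 | T9 | T10.

(* T1: N-W, T2: N-E, T3: S-E, T4: S-W arcs; T5 horizontal; T6 vertical;
   T7: arcs N-W and S-E; T8: arcs N-E and S-W;
   T9, T10: crossing of horizontal and vertical segments, vertical over in T9,
   horizontal over in T10. *)
Definition tile_exit (t : tile) (s : side) : option side :=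
  match t, s with
  | T1, SN => Some SW | T1, SW => Some SN
  | T2, SN => Some SE | T2, SE => Some SN
  | T3, SS => Some SE | T3, SE => Some SS
  | T4, SS => Some SW | T4, SW => Some SS
  | T5, SW => Some SE | T5, SE => Some SW
  | T6, SN => Some SS | T6, SS => Some SN
  | T7, SN => Some SW | T7, SW => Some SN | T7, SS => Some SE | T7, SE => Some SS
  | T8, SN => Some SE | T8, SE => Some SN | T8, SS => Some SW | T8, SW => Some SS
  | (T9 | T10), SN => Some SS | (T9 | T10), SS => Some SN
  | (T9 | T10), SW => Some SE | (T9 | T10), SE => Some SW
  | _, _ => None
  end.

(* Tiles are at positions 0..n-1 from left to right.  The 2(1+n) = 2n+2
   boundary unit edges are indexed by k < 2n+2:
     k < n        : top edge of tile k
     n <= k < 2n  : bottom edge of tile k-n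
     k = 2n       : left edge of tile 0
     k = 2n+1     : right edge of tile n-1.
   The pairing is a fixed-point-free involution of the boundary edges. *)
Record row_mosaic (n : nat) := RowMosaic {
  rm_tile : 'I_n -> tile;
  rm_pair : 'I_(2 * n + 2) -> 'I_(2 * n + 2);
  rm_pair_invol : forall k, rm_pair (rm_pair k) = k;
  rm_pair_fpf : forall k, rm_pair k <> k
}.

Section Mosaic.
Variables (n : nat) (M : row_mosaic n).

Definition tile_at (i : nat) : tile :=
  if insub i is Some j then rm_tile M j else T0.

Definition pairn (k : nat) : nat :=
  if insub k is Some j then val (rm_pair M j) else k.

(* a state (i, s) = "entering tile i through the midpoint of its side s" *)
Definition state := (nat * side)%type.

Definition bnd_index (x : state) : nat :=
  match x.2 with
  | SN => x.1 | SS => n + x.1 | SW => 2 * n | SE => (2 * n).+1 end.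

Definition bnd_edge (k : nat) : state :=
  if k < n then (k, SN) else if k < 2 * n then (k - n, SS)
  else if k == 2 * n then (0, SW) else (n.-1, SE).

(* leaving tile i through side s: where do we enter next? *)
Definition next_enter (i : nat) (s : side) : state :=
  match s with
  | SE => if i.+1 < n then (i.+1, SW) else bnd_edge (pairn (bnd_index (i, s)))
  | SW => if 0 < i then (i.-1, SE) else bnd_edge (pairn (bnd_index (i, s)))
  | _ => bnd_edge (pairn (bnd_index (i, s)))
  end.

Definition has_end (x : state) : bool := isSome (tile_exit (tile_at x.1) x.2).

Definition suitably_connected : Prop :=
  (forall i, i.+1 < n -> has_end (i, SE) = has_end (i.+1, SW)) /\
  (forall k, k < 2 * n + 2 -> has_end (bnd_edge k) = has_end (bnd_edge (pairn k))).

Definition step (x : state) : state :=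
  match tile_exit (tile_at x.1) x.2 with
  | Some s' => next_enter x.1 s'
  | None => x
  end.

Definition valid_state (x : state) : Prop := x.1 < n /\ has_end x.

(* the same strand traversed in the opposite direction *)
Definition rev_state (x : state) : state :=
  (x.1, odflt x.2 (tile_exit (tile_at x.1) x.2)).

(* the orbit of x0 (of period L) is a single closed component which traverses
   every strand of the mosaic: the closure diagram is a knot diagram *)
Definition knot_trace (x0 : state) (L : nat) : Prop :=
  [/\ 0 < L, valid_state x0, iter L step x0 = x0,
      (forall k, 0 < k < L -> iter k step x0 <> x0) &
      (forall y, valid_state y ->
         (exists2 k, k < L & iter k step x0 = y) \/
         (exists2 k, k < L & iter k step x0 = rev_state y))].

Definition visits (x0 : state) (L : nat) (y : state) : bool :=
  has (fun k => iter k step x0 == y) (iota 0 L).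

(* sign of the crossing in tile i, for the orientation given by the trace:
   with direction vectors d_over, d_under, positive iff det(d_over,d_under)>0 *)
Definition crossing_sign (x0 : state) (L : nat) (i : nat) : bool :=
  let east := visits x0 L (i, SW) in
  let north := visits x0 L (i, SS) in
  match tile_at i with
  | T9 => east != north
  | _ => east == north
  end.

Definition is_vertical (s : side) : bool :=
  match s with SN | SS => true | _ => false end.

Definition passage (x0 : state) (L : nat) (x : state) : gcode :=
  match tile_at x.1 with
  | T9 => [:: (x.1, is_vertical x.2, crossing_sign x0 L x.1)]
  | T10 => [:: (x.1, ~~ is_vertical x.2, crossing_sign x0 L x.1)]
  | _ => [::]
  end.

(* Gauss code of the knot diagram, crossings labelled by their tile *)
Definition mosaic_gcode (x0 : state) (L : nat) : gcode :=
  flatten [seq passage x0 L (iter k step x0) | k <- iota 0 L].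

End Mosaic.

Definition represents (n : nat) (M : row_mosaic n) (c : gcode) : Prop :=
  suitably_connected M /\
  exists (x0 : state) (L : nat), knot_trace M x0 L /\ gequiv (mosaic_gcode M x0 L) c.

From mathcomp Require Import all_boot zify.
From Stdlib Require Import Relations.
Set Implicit Arguments. Unset Strict Implicit. Unset Printing Implicit Defensive.

(* Relabel the crossings of the Gauss code as 0, ..., m-1 and give crossing a
   the tiles T3, T9, T4 at positions 3a, 3a+1, 3a+2 of a 1 x 3m row.  The over
   passage through a is the vertical strand of the crossing tile 3a+1, run
   downwards exactly when the crossing is positive; the under passage enters
   at the bottom of tile 3a, runs east through the crossing tile and leaves at
   the bottom of tile 3a+2.  Gluing the exit edge of each passage to the entry
   edge of the next passage of the code, and the unused boundary edges in
   pairs, closes the row into a single knot whose Gauss code is the given one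
   with crossing a renamed 3a+1.  An empty code is first replaced by a
   Reidemeister I kink. *)

Section FlattenCycle.
Variables (T S : Type) (e : rel T) (hd : S -> T) (tl : S -> seq T).

Let blk x := hd x :: tl x.
Let link x y := e (last (hd x) (tl x)) (hd y) && path e (hd y) (tl y).

Lemma path_flatten x s :
  path link x s -> path e (last (hd x) (tl x)) (flatten (map blk s)).
Proof.
elim: s x => [|y s IHs] x //= /andP[/andP[xy py] ps].
by rewrite cat_path /= xy py; apply: IHs.
Qed.

Lemma cycle_flatten s : cycle link s -> cycle e (flatten (map blk s)).
Proof.
case: s => [|x s] //= /path_flatten.
rewrite -cats1 map_cat flatten_cat /= cats0 cat_path /= => /and3P[ps px xx].
by rewrite rcons_cat cat_path xx rcons_path ps.
Qed.

End FlattenCycle.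

Lemma uniq_flatten_map (S T : eqType) (g : S -> seq T) (s : seq S) :
  uniq s -> {in s, forall x, uniq (g x)} ->
  {in s &, forall x y z, z \in g x -> z \in g y -> x = y} ->
  uniq (flatten (map g s)).
Proof.
elim: s => [|x s IHs] //= /andP[xs us] ug dg.
rewrite cat_uniq ug ?mem_head //= IHs //; last 2 first.
- by move=> y ys; apply: ug; rewrite inE ys orbT.
- by move=> y y' ys y's; apply: dg; rewrite inE ?ys ?y's orbT.
rewrite andbT; apply/hasPn => z /flatten_mapP[y ys zy]; apply/negP => zx.
have yx : y = x by apply: dg zy zx; rewrite inE ?ys ?eqxx ?orbT.
by move: xs; rewrite -yx ys.
Qed.

Lemma flatten_map_flatten (S T U : Type) (g : T -> seq U) (b : S -> seq T) s :
  flatten (map g (flatten (map b s))) = flatten (map (fun x => flatten (map g (b x))) s).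
Proof. by elim: s => //= x s IHs; rewrite map_cat flatten_cat IHs. Qed.

Lemma nth_find_inj (S T : eqType) (f : S -> T) (s : seq S) (x0 x : S) :
  {in s &, injective f} -> x \in s ->
  nth x0 s (find (fun y => f y == f x) s) = x.
Proof.
move=> f_inj xs; have hs : has (fun y => f y == f x) s by apply/hasP; exists x.
by move/eqP: (nth_find x0 hs); apply: f_inj xs; rewrite mem_nth // -has_find.
Qed.

Lemma fcycle_traject (T : eqType) (f : T -> T) (x : T) (p : seq T) :
  fcycle f (x :: p) ->
  x :: p = traject f x (size p).+1 /\ iter (size p).+1 f x = x.
Proof.
move=> /= /fpathE; rewrite size_rcons trajectSr => /rcons_inj[ep ex].
by split; [rewrite /= -ep | rewrite -iterS iterSr -ex].
Qed.

Lemma traject_iota (T : Type) (f : T -> T) x n :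
  traject f x n = [seq iter k f x | k <- iota 0 n].
Proof.
elim: n x => // n IHn x; rewrite trajectS IHn /= -[1]addn0 iotaDl -map_comp.
by congr (_ :: _); apply: eq_map => k /=; rewrite add0n -iterSr.
Qed.

Lemma injective_index_enum (s : seq nat) :
  uniq s -> exists2 f : nat -> nat, injective f &
    forall i, i < size s -> f (nth 0 s i) = i.
Proof.
elim: s => [_|a s IHs /= /andP[a_s us]]; first by exists id.
have [f f_inj fs] := IHs us.
exists (fun b => if b == a then 0 else (f b).+1).
  move=> b b'; case: eqP => [->|_]; case: eqP => [->|_] //.
  by move=> [/f_inj].
case=> [|i] /=; rewrite ?eqxx // ltnS => lti.
by rewrite fs //; case: eqP => // eq_a; move: a_s; rewrite -eq_a mem_nth.
Qed.

Section GaussCode.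
Variable c : gcode.
Hypothesis c_wf : gwf c.

Lemma gwf_flip a o s : (a, o, s) \in c -> (a, ~~ o, s) \in c.
Proof. by move=> /c_wf[]. Qed.

Lemma gwf_count a o s : (a, o, s) \in c -> count (fun f => glabel f == a) c = 2.
Proof. by move=> /c_wf[]. Qed.

Lemma gwf_entry_inj e e' : e \in c -> e' \in c ->
  (e.1.1, e.1.2) = (e'.1.1, e'.1.2) -> e = e'.
Proof.
case: e e' => [[a o] s] [[a' o'] s'] ec e'c /= [eq_a eq_o]; subst a' o'.
case: (eqVneq s s') => [-> //|ss'].
have three : uniq [:: (a, o, s); (a, o, s'); (a, ~~ o, s)].
  by rewrite /= !inE !xpair_eqE !eqxx (negbTE ss'); case: (o).
have sub : {subset [:: (a, o, s); (a, o, s'); (a, ~~ o, s)] <=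
                   [seq f <- c | glabel f == a]}.
  by move=> f; rewrite !inE mem_filter => /or3P[] /eqP->;
     rewrite eqxx ?ec ?e'c ?gwf_flip.
by have := uniq_leq_size three sub; rewrite size_filter (gwf_count ec).
Qed.

Lemma gwf_uniq : uniq c.
Proof.
apply: count_mem_uniq => [[[a o] s]].
case ec: ((a, o, s) \in c).
  2: by apply/eqP; rewrite -leqn0 leqNgt -has_count has_pred1 ec.
have fc := gwf_flip ec.
have disj : predI (pred1 (a, o, s)) (pred1 (a, ~~ o, s)) =1 pred0.
  by move=> f /=; case: eqP => [->|//]; apply/eqP => -[]; case: (o).
have two : count (pred1 (a, o, s)) c + count (pred1 (a, ~~ o, s)) c <= 2.
  rewrite -(gwf_count ec) -count_predUI (eq_count disj) count_pred0 addn0.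
  by apply: sub_count => f /= /orP[] /eqP->.
have pos f : f \in c -> 0 < count (pred1 f) c by rewrite -has_count has_pred1.
by have := pos _ ec; have := pos _ fc; move: two; rewrite /=; lia.
Qed.

Lemma gwf_crossing a : a \in map glabel c ->
  exists s, (a, true, s) \in c /\ (a, false, s) \in c.
Proof.
case/mapP => [[[b o] s]] ec ->; exists s; have := gwf_flip ec.
by case: o ec.
Qed.

End GaussCode.

Definition relabel (f : nat -> nat) (c : gcode) : gcode :=
  [seq (f e.1.1, e.1.2, e.2) | e <- c].

Lemma gwf_relabel f c : injective f -> gwf c -> gwf (relabel f c).
Proof.
move=> f_inj c_wf _ /mapP[[[a o] s] ec ->]; split.
  rewrite count_map -(gwf_count c_wf ec); apply: eq_count => e /=.
  by rewrite (inj_eq f_inj).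
by apply/mapP; exists (a, ~~ o, s); rewrite ?gwf_flip.
Qed.

Lemma gequiv_relabel f c : injective f -> gwf c -> gequiv (relabel f c) c.
Proof.
move=> f_inj c_wf; apply/rst_sym/rst_step.
by split; [|split; [apply: gwf_relabel | apply: gm_relabel]].
Qed.

Lemma gequiv_compact c : gwf c -> exists m c',
  [/\ gwf c', gequiv c' c, size c' = size c &
      forall a, (a \in map glabel c') = (a < m)].
Proof.
move=> c_wf; set s := undup (map glabel c).
have [f f_inj fs] := injective_index_enum (undup_uniq (map glabel c)).
exists (size s), (relabel f c); split.
- exact: gwf_relabel.
- exact: gequiv_relabel.
- exact: size_map.
- move=> a; rewrite /relabel -map_comp; apply/mapP/idP => [[e ec ->]|lt_as].
    have es : e.1.1 \in s by rewrite mem_undup (map_f glabel ec).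
    by rewrite /glabel /= -{1}(nth_index 0 es) fs index_mem.
  have : nth 0 s a \in map glabel c by rewrite -mem_undup mem_nth.
  by case/mapP => e ec eq_e; exists e; rewrite // /glabel /= -[e.1.1]eq_e fs.
Qed.

Lemma gequiv_nonempty c : gwf c -> exists e d, gwf (e :: d) /\ gequiv (e :: d) c.
Proof.
case: c => [_|e d c_wf]; last by exists e, d; split; [|apply: rst_refl].
exists (0, true, true), [:: (0, false, true)].
have d_wf : gwf [:: (0, true, true); (0, false, true)].
  by move=> e; rewrite !inE => /orP[] /eqP->.
split; rewrite // /gequiv; apply/rst_sym/rst_step; split=> //.
by split; [|apply: (gm_R1 [::] [::] 0 true true)].
Qed.

Lemma represents_gequiv n (M : row_mosaic n) c d :
  represents M c -> gequiv c d -> represents M d.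
Proof.
case=> sc [x0 [L [kt cd0]]] cd; split=> //; exists x0, L; split=> //.
exact: rst_trans cd0 cd.
Qed.

Definition block_tile (i : nat) : tile := nth T0 [:: T3; T9; T4] (i %% 3).

Lemma block_tileE a :
  [/\ block_tile (3 * a) = T3, block_tile (3 * a).+1 = T9 & block_tile (3 * a).+2 = T4].
Proof.
rewrite /block_tile; split; [have -> : (3 * a) %% 3 = 0 | have -> : (3 * a).+1 %% 3 = 1
  | have -> : (3 * a).+2 %% 3 = 2] => //; lia.
Qed.

Lemma block_tile_ends i :
  [/\ isSome (tile_exit (block_tile i) SN) = (i %% 3 == 1),
      isSome (tile_exit (block_tile i) SS),
      isSome (tile_exit (block_tile i) SW) = (i %% 3 != 0) &
      isSome (tile_exit (block_tile i) SE) = (i %% 3 != 2)].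
Proof.
rewrite /block_tile; have : i %% 3 < 3 by rewrite ltn_mod.
by case: (i %% 3) => [|[|[|]]].
Qed.

Definition entry_state (e : gentry) : state :=
  if e.1.2 then ((3 * e.1.1).+1, if e.2 then SN else SS) else (3 * e.1.1, SS).

Definition exit_state (e : gentry) : state :=
  if e.1.2 then ((3 * e.1.1).+1, if e.2 then SS else SN) else ((3 * e.1.1).+2, SS).

Lemma entry_neq_exit e : entry_state e != exit_state e.
Proof. by case: e => [[a [] []]]; rewrite /= xpair_eqE /= ?eqxx ?andbT //; lia. Qed.

Definition passage_tail (e : gentry) : seq state :=
  if e.1.2 then [::] else [:: ((3 * e.1.1).+1, SW); ((3 * e.1.1).+2, SW)].

Definition passage_states (e : gentry) : seq state := entry_state e :: passage_tail e.

(* A visited state determines the label of its crossing and whether the strand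
   passes over; by [gwf_entry_inj] this pins down the Gauss entry. *)
Definition state_key (y : state) : nat * bool :=
  (y.1 %/ 3, (y.1 %% 3 == 1) && is_vertical y.2).

Lemma state_key_passage e y :
  y \in passage_states e -> state_key y = (e.1.1, e.1.2).
Proof.
case: e => [[a [] s]]; rewrite /passage_states /passage_tail !inE /=.
  by move=> /eqP->; rewrite /state_key /=; case: s => /=; congr (_, _); lia.
by move=> /or3P[] /eqP->; rewrite /state_key /=; congr (_, _); lia.
Qed.

Lemma state_key_entry e : state_key (entry_state e) = (e.1.1, e.1.2).
Proof. exact/state_key_passage/mem_head. Qed.

Lemma state_key_exit e : state_key (exit_state e) = (e.1.1, e.1.2).
Proof. by case: e => [[a [] []]]; rewrite /state_key /=; congr (_, _); lia. Qed.

Lemma bnd_edgeK n x :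
  x.1 < n -> is_vertical x.2 -> bnd_edge n (bnd_index n x) = x.
Proof.
case: x => i [] //= lt_in _; rewrite /bnd_edge /bnd_index /= ?lt_in //.
by rewrite ifF ?ifT ?addKn //; lia.
Qed.

Section RowMosaicOfGaussCode.
Variables (e0 : gentry) (c0 : gcode) (m : nat).
Local Notation c := (e0 :: c0).
Local Notation n := (3 * m).
Hypotheses (c_wf : gwf c) (c_labels : forall a, (a \in map glabel c) = (a < m)).

Lemma label_lt e : e \in c -> e.1.1 < m.
Proof. by move=> ec; rewrite -c_labels (map_f glabel ec). Qed.

Lemma crossing_count_gt0 : 0 < m.
Proof. by have := label_lt (mem_head e0 c0); lia. Qed.

Lemma passage_bounds e : e \in c ->
  [/\ (entry_state e).1 < n, is_vertical (entry_state e).2,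
      (exit_state e).1 < n & is_vertical (exit_state e).2].
Proof. by move=> /label_lt; case: e => [[a [] []]] /= lt_am; split=> //; lia. Qed.

Definition entry_edge (e : gentry) : nat := bnd_index n (entry_state e).
Definition exit_edge (e : gentry) : nat := bnd_index n (exit_state e).

Lemma entry_edge_inj : {in c &, injective entry_edge}.
Proof.
move=> e e' ec e'c; have [? ? _ _] := passage_bounds ec.
have [? ? _ _] := passage_bounds e'c.
move=> /(congr1 (bnd_edge n)); rewrite !bnd_edgeK // => same_entry.
by apply: (gwf_entry_inj c_wf ec e'c); rewrite -state_key_entry same_entry state_key_entry.
Qed.

Lemma exit_edge_inj : {in c &, injective exit_edge}.
Proof.
move=> e e' ec e'c; have [_ _ ? ?] := passage_bounds ec.
have [_ _ ? ?] := passage_bounds e'c.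
move=> /(congr1 (bnd_edge n)); rewrite !bnd_edgeK // => same_exit.
by apply: (gwf_entry_inj c_wf ec e'c); rewrite -state_key_exit same_exit state_key_exit.
Qed.

Lemma entry_edge_neq_exit_edge e e' : e \in c -> e' \in c -> entry_edge e != exit_edge e'.
Proof.
move=> ec e'c; apply/eqP; have [? ? _ _] := passage_bounds ec.
have [_ _ ? ?] := passage_bounds e'c.
move=> /(congr1 (bnd_edge n)); rewrite !bnd_edgeK // => same_state.
have ee' : e = e'.
  by apply: (gwf_entry_inj c_wf ec e'c); rewrite -state_key_entry same_state state_key_exit.
by move: same_state; rewrite ee' => /eqP; apply/negP; apply: entry_neq_exit.
Qed.

(* With the indexing of [bnd_edge], the knot crosses the top of every crossing
   tile 3a+1 and the whole bottom row. *)
Definition used_edge (k : nat) : bool := (k < n) && (k %% 3 == 1) || (n <= k < 2 * n).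

Lemma used_passage_edges e : e \in c -> used_edge (entry_edge e) /\ used_edge (exit_edge e).
Proof.
move=> /label_lt; case: e => [[a [] []]] /= lt_am;
  by rewrite /used_edge /entry_edge /exit_edge /bnd_index /=; split; lia.
Qed.

Lemma used_edge_passage k : used_edge k ->
  exists2 e, e \in c & k = entry_edge e \/ k = exit_edge e.
Proof.
rewrite /used_edge /entry_edge /exit_edge /bnd_index.
case/orP=> [/andP[lt_kn /eqP k1] | /andP[le_nk lt_k2n]].
  have /(gwf_crossing c_wf)[s [ov _]] : k %/ 3 \in map glabel c.
    by rewrite c_labels; lia.
  by exists (k %/ 3, true, s) => //=; case: s {ov}; [left|right]; lia.
have /(gwf_crossing c_wf)[s [ov un]] : (k - n) %/ 3 \in map glabel c.
  by rewrite c_labels; lia.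
have [r0|[r1|r2]] : (k - n) %% 3 = 0 \/ (k - n) %% 3 = 1 \/ (k - n) %% 3 = 2 by lia.
- by exists ((k - n) %/ 3, false, s) => //=; left; lia.
- by exists ((k - n) %/ 3, true, s) => //=; case: s {ov un}; [right|left]; lia.
- by exists ((k - n) %/ 3, false, s) => //=; right; lia.
Qed.

(* The exit of each passage is glued to the entry of the next passage. *)
Definition partner (k : nat) : nat :=
  let find_by f := nth e0 c (find (fun e => f e == k) c) in
  if has (fun e => exit_edge e == k) c then entry_edge (next c (find_by exit_edge))
  else exit_edge (prev c (find_by entry_edge)).

(* Unused edges: the top of 3a with the top of 3a+2, the left end with the right end. *)
Definition spare_partner (k : nat) : nat :=
  if k < n then (if k %% 3 == 0 then k + 2 else k - 2)
  else if k == 2 * n then (2 * n).+1 else 2 * n.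

Definition pairing (k : nat) : nat := if used_edge k then partner k else spare_partner k.

Lemma used_edge_lt k : used_edge k -> k < 2 * n + 2.
Proof. by rewrite /used_edge; lia. Qed.

Lemma pairing_exit_edge e : e \in c -> pairing (exit_edge e) = entry_edge (next c e).
Proof.
move=> ec; rewrite /pairing (proj2 (used_passage_edges ec)) /partner ifT.
  by rewrite nth_find_inj //; apply: exit_edge_inj.
by apply/hasP; exists e.
Qed.

Lemma pairing_entry_edge e : e \in c -> pairing (entry_edge e) = exit_edge (prev c e).
Proof.
move=> ec; rewrite /pairing (proj1 (used_passage_edges ec)) /partner ifF.
  by rewrite nth_find_inj //; apply: entry_edge_inj.
by apply/negbTE/hasPn => f fc; rewrite eq_sym entry_edge_neq_exit_edge.
Qed.

Lemma pairing_used k : used_edge k ->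
  [/\ used_edge (pairing k), pairing (pairing k) = k & pairing k != k].
Proof.
have c_uniq := gwf_uniq c_wf.
case/used_edge_passage => e ec [->|->].
  have pc : prev c e \in c by rewrite mem_prev.
  rewrite pairing_entry_edge // pairing_exit_edge // next_prev //.
  by split; [case: (used_passage_edges pc)| |rewrite eq_sym entry_edge_neq_exit_edge].
have nc : next c e \in c by rewrite mem_next.
rewrite pairing_exit_edge // pairing_entry_edge // prev_next //.
by split; [case: (used_passage_edges nc)| |rewrite entry_edge_neq_exit_edge].
Qed.

Lemma spare_partner_spec k : k < 2 * n + 2 -> ~~ used_edge k ->
  [/\ ~~ used_edge (spare_partner k), spare_partner (spare_partner k) = k,
      spare_partner k != k & spare_partner k < 2 * n + 2].
Proof.
rewrite /used_edge => lt_k unused.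
have [[lt_kn k0]|[[lt_kn k2]|[->|->]]] :
    k < n /\ k %% 3 = 0 \/ k < n /\ k %% 3 = 2 \/ k = 2 * n \/ k = (2 * n).+1 by lia.
- have -> : spare_partner k = k + 2 by rewrite /spare_partner lt_kn k0.
  have -> : spare_partner (k + 2) = k.
    by rewrite /spare_partner ifT ?ifF; [lia | apply/eqP; lia | lia].
  by split; lia.
- have -> : spare_partner k = k - 2 by rewrite /spare_partner lt_kn k2.
  have -> : spare_partner (k - 2) = k.
    by rewrite /spare_partner ifT ?ifT; [lia | apply/eqP; lia | lia].
  by split; lia.
- have -> : spare_partner (2 * n) = (2 * n).+1 by rewrite /spare_partner ifF ?eqxx //; lia.
  have -> : spare_partner (2 * n).+1 = 2 * n by rewrite /spare_partner !ifF //; lia.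
  by split; lia.
- have -> : spare_partner (2 * n).+1 = 2 * n by rewrite /spare_partner !ifF //; lia.
  have -> : spare_partner (2 * n) = (2 * n).+1 by rewrite /spare_partner ifF ?eqxx //; lia.
  by split; lia.
Qed.

Lemma pairing_spec k : k < 2 * n + 2 ->
  [/\ pairing k < 2 * n + 2, pairing (pairing k) = k, pairing k != k &
      used_edge (pairing k) = used_edge k].
Proof.
move=> lt_k; case: (boolP (used_edge k)) => [used|unused].
  have [used' ? ?] := pairing_used used.
  by split=> //; move: used'; rewrite /used_edge; lia.
have [unused' spareK ? ?] := spare_partner_spec lt_k unused.
by rewrite /pairing (negbTE unused) (negbTE unused') spareK.
Qed.

Lemma pairing_lt k : k < 2 * n + 2 -> pairing k < 2 * n + 2.
Proof. by case/pairing_spec. Qed.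

Definition pairing_ord (k : 'I_(2 * n + 2)) : 'I_(2 * n + 2) :=
  Ordinal (pairing_lt (ltn_ord k)).

Lemma pairing_ordK k : pairing_ord (pairing_ord k) = k.
Proof. by apply: val_inj; case: (pairing_spec (ltn_ord k)). Qed.

Lemma pairing_ord_neq k : pairing_ord k <> k.
Proof. by move=> /(congr1 val) /eqP; case: (pairing_spec (ltn_ord k)) => _ _ /negbTE->. Qed.

Definition mosaic : row_mosaic n :=
  RowMosaic (fun j => block_tile j) pairing_ordK pairing_ord_neq.

Lemma tile_atE i : tile_at mosaic i = if i < n then block_tile i else T0.
Proof. by rewrite /tile_at; case: insubP => [j -> <-|/negbTE->]. Qed.

Lemma pairnE k : k < 2 * n + 2 -> pairn mosaic k = pairing k.
Proof. by move=> lt_k; rewrite /pairn insubT. Qed.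

Lemma has_end_bnd_edge k : k < 2 * n + 2 -> has_end mosaic (bnd_edge n k) = used_edge k.
Proof.
move=> lt_k; have m_gt0 := crossing_count_gt0; rewrite /bnd_edge /has_end /used_edge.
case: (ltnP k n) => [lt_kn|le_nk] /=.
  by rewrite tile_atE lt_kn; have [-> _ _ _] := block_tile_ends k; lia.
case: (ltnP k (2 * n)) => [lt_k2n|le_2nk] /=.
  by rewrite tile_atE ifT; [have [_ -> _ _] := block_tile_ends (k - n); lia | lia].
case: eqP => _ /=; rewrite tile_atE ifT; try lia; first by [].
by rewrite /block_tile (_ : n.-1 %% 3 = 2) //; lia.
Qed.

Lemma mosaic_suitably_connected : suitably_connected mosaic.
Proof.
split=> [i lt_i|k lt_k].
  rewrite /has_end !tile_atE /= ifT 1?ifT; try lia.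
  by have [_ _ _ ->] := block_tile_ends i; have [_ _ -> _] := block_tile_ends i.+1; lia.
rewrite pairnE // !has_end_bnd_edge ?pairing_lt //.
by case: (pairing_spec lt_k).
Qed.

Lemma step_passage e :
  e \in c -> path (frel (step mosaic)) (entry_state e) (passage_tail e).
Proof.
move=> /label_lt; case: e => [[a [] s]] //= lt_am; have [t0 t1 _] := block_tileE a.
rewrite /step /= !tile_atE !ifT ?t0 ?t1 /= /next_enter ?ifT ?eqxx //; lia.
Qed.

Lemma step_passage_exit e : e \in c ->
  step mosaic (last (entry_state e) (passage_tail e)) =
  bnd_edge n (pairn mosaic (exit_edge e)).
Proof.
move=> /label_lt; case: e => [[a [] []]] /= lt_am; have [_ t1 t2] := block_tileE a;
  by rewrite /step tile_atE ifT ?t1 ?t2 //=; lia.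
Qed.

Lemma step_passage_next e : e \in c ->
  step mosaic (last (entry_state e) (passage_tail e)) = entry_state (next c e).
Proof.
move=> ec; have nc : next c e \in c by rewrite mem_next.
have [? ? _ _] := passage_bounds nc; have [_ /used_edge_lt ?] := used_passage_edges ec.
by rewrite step_passage_exit // pairnE // pairing_exit_edge // bnd_edgeK.
Qed.

Definition knot_states : seq state := flatten (map passage_states c).
Definition knot_length : nat := size knot_states.
Local Notation x0 := (entry_state e0).

Lemma knot_states_cycle : fcycle (step mosaic) knot_states.
Proof.
apply: (cycle_flatten (hd := entry_state) (tl := passage_tail)).
apply: (@sub_in_cycle _ (mem c) (frel (next c))); last exact: cycle_next (gwf_uniq c_wf).
  move=> e e' ec _ /eqP <-; have nc : next c e \in c by rewrite mem_next.
  by apply/andP; split; [apply/eqP/step_passage_next | apply: step_passage].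
by apply/allP.
Qed.

Lemma knot_states_traject :
  knot_states = traject (step mosaic) x0 knot_length /\
  iter knot_length (step mosaic) x0 = x0.
Proof. exact: fcycle_traject knot_states_cycle. Qed.

Lemma knot_statesE :
  knot_states = [seq iter k (step mosaic) x0 | k <- iota 0 knot_length].
Proof. by rewrite {1}(proj1 knot_states_traject) traject_iota. Qed.

Lemma knot_states_uniq : uniq knot_states.
Proof.
apply: uniq_flatten_map; first exact: gwf_uniq.
  by move=> [[a [] s]] _; rewrite //= !inE !xpair_eqE /= ?andbT; lia.
move=> e e' ec e'c y ye ye'; apply: (gwf_entry_inj c_wf ec e'c).
by rewrite -(state_key_passage ye) (state_key_passage ye').
Qed.

Lemma visitsE y : visits mosaic x0 knot_length y = (y \in knot_states).
Proof. by rewrite knot_statesE -has_pred1 has_map. Qed.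

Lemma knot_states_key e y : e \in c -> y \in knot_states ->
  state_key y = (e.1.1, e.1.2) -> y \in passage_states e.
Proof.
move=> ec /flatten_mapP[e' e'c ye'] key_y; have := state_key_passage ye'.
by rewrite key_y => /(gwf_entry_inj c_wf ec e'c) ->.
Qed.

Lemma crossing_signE e : e \in c ->
  crossing_sign mosaic x0 knot_length (3 * e.1.1).+1 = e.2.
Proof.
case: e => [[a o] s] ec /=.
have [ov un] : (a, true, s) \in c /\ (a, false, s) \in c.
  by case: o ec => ec; rewrite ec (gwf_flip c_wf ec).
have [_ t1 _] := block_tileE a.
rewrite /crossing_sign tile_atE ifT ?t1; last by have /= := label_lt ec; lia.
have -> : visits mosaic x0 knot_length ((3 * a).+1, SW).
  by rewrite visitsE; apply/flatten_mapP; exists (a, false, s); rewrite // !inE eqxx orbT.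
rewrite visitsE; case: s ov {un ec} => ov.
  have key : state_key ((3 * a).+1, SS) = (a, true).
    by rewrite /state_key /=; congr (_, _); lia.
  case: (boolP (_ \in knot_states)) => // /(knot_states_key ov)/(_ key).
  by rewrite inE xpair_eqE andbF.
have -> // : ((3 * a).+1, SS) \in knot_states.
by apply/flatten_mapP; exists (a, true, false); rewrite ?mem_head.
Qed.

Lemma mosaic_gcodeE :
  mosaic_gcode mosaic x0 knot_length = relabel (fun a => (3 * a).+1) c.
Proof.
rewrite /mosaic_gcode (map_comp (passage mosaic x0 knot_length)) -knot_statesE.
rewrite /relabel -[in RHS]flatten_map1 /knot_states flatten_map_flatten; congr flatten.
apply/eq_in_map => -[[a o] s] ec; have := crossing_signE ec; have := label_lt ec.
have [t0 t1 t2] := block_tileE a.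
by case: o s {ec} => [] [] /= lt_am sign;
  rewrite /passage /= !tile_atE !ifT ?t0 ?t1 ?t2 ?sign //; lia.
Qed.

Lemma knot_states_cover y : valid_state mosaic y ->
  y \in knot_states \/ rev_state mosaic y \in knot_states.
Proof.
have in_ks e z : e \in c -> z \in passage_states e -> z \in knot_states.
  by move=> ec ze; apply/flatten_mapP; exists e.
case: y => i sd [/= lt_in]; rewrite /has_end /rev_state /= tile_atE lt_in.
have [a [r [eq_i lt_r]]] : exists a r, i = 3 * a + r /\ r < 3.
  by exists (i %/ 3), (i %% 3); split; lia.
subst i.
have /(gwf_crossing c_wf)[s [ov un]] : a \in map glabel c by rewrite c_labels; lia.
have ov_ks := in_ks _ _ ov (mem_head _ _); have un_ks := in_ks _ _ un.
have [t0 t1 t2] := block_tileE a.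
case: r lt_r {lt_in} => [|[|[|//]]] _; rewrite ?addn0 ?addn1 ?addn2 ?t0 ?t1 ?t2.
- by case: sd => //= _; [right|left]; apply: un_ks; rewrite /passage_states /= !inE eqxx.
- case: sd => //= _.
  + by case: s ov_ks {ov un un_ks} => /= ov_ks; [left|right].
  + by right; apply: un_ks; rewrite /passage_states /= !inE eqxx orbT.
  + by case: s ov_ks {ov un un_ks} => /= ov_ks; [right|left].
  + by left; apply: un_ks; rewrite /passage_states /= !inE eqxx orbT.
- case: sd => //= _; [right|left];
    by apply: un_ks; rewrite /passage_states /= !inE eqxx !orbT.
Qed.

Lemma mosaic_knot_trace : knot_trace mosaic x0 knot_length.
Proof.
rewrite /knot_trace.
have [ksE iterL] := knot_states_traject.
have [? ? _ _] := passage_bounds (mem_head e0 c0).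
have [x0_used _] := used_passage_edges (mem_head e0 c0).
split=> //; first split=> //.
- by rewrite -[x0](@bnd_edgeK n) // has_end_bnd_edge //; apply: used_edge_lt.
- move=> k /andP[k_gt0 lt_kL] iter_k.
  have := nth_uniq x0 lt_kL (ltn_trans k_gt0 lt_kL) knot_states_uniq.
  by rewrite ksE !nth_traject ?size_traject // iter_k /= eqxx; lia.
move=> y /knot_states_cover[] y_ks; [left|right]; move: y_ks;
  by rewrite knot_statesE => /mapP[k]; rewrite mem_iota => /andP[_ lt_k] ->; exists k.
Qed.

Lemma mosaic_represents : represents mosaic (relabel (fun a => (3 * a).+1) c).
Proof.
split; first exact: mosaic_suitably_connected.
exists x0, knot_length; split; first exact: mosaic_knot_trace.
by rewrite mosaic_gcodeE; apply: rst_refl.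
Qed.

End RowMosaicOfGaussCode.

Theorem mainTheorem2 :
  forall c : gcode, gwf c ->
  exists (n : nat) (M : row_mosaic n), 0 < n /\ represents M c.
Proof.
move=> c c_wf.
have [e [d [ed_wf ed_c]]] := gequiv_nonempty c_wf.
have [m [[|e' d'] [c'_wf c'_ed size_c' c'_labels]]] := gequiv_compact ed_wf; first by [].
have relabel_inj : injective (fun a => (3 * a).+1) by move=> a b []; lia.
exists (3 * m), (mosaic c'_wf c'_labels); split.
  by rewrite muln_gt0 (crossing_count_gt0 c'_labels).
apply: (represents_gequiv _ ed_c); apply: (represents_gequiv _ c'_ed).
apply: (represents_gequiv (mosaic_represents c'_wf c'_labels)).
exact: gequiv_relabel.
Qed.
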